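(* Let $n\ge 4$ and let $\sigma$ be a maximal simplex of $\Delta_n$. Then $\dim(\sigma)\in\{7,\,n+3,\,2n-1\}$. Moreover, if $\dim(\sigma)\neq 7$, then either $\sigma=N(v)\cup N(w)$ for some adjacent vertices $v,w$ of $\mathbb{I}_n$, or $\sigma=N(u)\cup K_u^{i,j,k}$ for some vertex $u$ and distinct $i,j,k\in[n]$.
   Context: $\mathbb{I}_n$ is the $n$-dimensional hypercube graph on vertex set $\{0,1\}^n$ (adjacent iff differing in exactly one coordinate), with Hamming distance $d(v,w)=\#\{i: v(i)\ne w(i)\}$. $\Delta_n=\mathcal{VR}(\mathbb{I}_n;3)$ is the simplicial complex whose simplices are the subsets $\sigma\subseteq\{0,1\}^n$ with $d(x,y)\le 3$ for all $x,y\in\sigma$; $\dim\sigma=|\sigma|-1$. $[n]=\{1,\dots,n\}$. For a vertex $u$ and distinct $i_1,\dots,i_k$, $u^{i_1,\dots,i_k}$ is $u$ with exactly coordinates $i_1,\dots,i_k$ changed. $N(u)=\{u^i:i\in[n]\}$. For distinct $i,j,k$, $K_u^{i,j,k}=\{u,u^{i,j},u^{j,k},u^{i,k}\}$. *)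

(* Coordinates [n] = {1..n} are represented by 'I_n. *)
From mathcomp Require Import all_boot.
Set Implicit Arguments. Unset Strict Implicit. Unset Printing Implicit Defensive.

Definition vert (n : nat) := {ffun 'I_n -> bool}.

Definition hdist n (v w : vert n) : nat := #|[set i | v i != w i]|.

Definition flips n (u : vert n) (S : {set 'I_n}) : vert n :=
  [ffun j => if j \in S then ~~ u j else u j].

Definition flip1 n (u : vert n) (i : 'I_n) : vert n := flips u [set i].
Definition flip2 n (u : vert n) (i j : 'I_n) : vert n := flips u [set i; j].

Definition nbhd n (u : vert n) : {set vert n} := [set flip1 u i | i : 'I_n].

Definition Kset n (u : vert n) (i j k : 'I_n) : {set vert n} :=
  [set u; flip2 u i j; flip2 u j k; flip2 u i k].

(* simplices of Delta_n = VR(I_n; 3): nonempty vertex sets of pairwise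
   Hamming distance <= 3 *)
Definition simplex n (s : {set vert n}) : Prop :=
  s != set0 /\ forall x y, x \in s -> y \in s -> hdist x y <= 3.

Definition maximal_simplex n (s : {set vert n}) : Prop :=
  simplex s /\ forall t, simplex t -> s \subset t -> t = s.

Definition dim n (s : {set vert n}) : nat := #|s|.-1.

(* Split a maximal simplex [s] by the parity of the distance to a vertex [b].
   Two vertices in the same class are at even distance at most 3, hence at
   distance exactly 2.  Each class has at least 4 elements: otherwise some
   neighbour of [b] is at distance 2 from the whole odd class, and maximality
   would put it in that class.  If a class has at least 5 elements, these are
   the neighbours of a single vertex [x]; then all of [s] lies within distance
   2 of [x], and the vertices at distance 2, read as pairwise intersecting
   2-sets of coordinates, form either a star with centre [p], giving
   N(x) u N(x^p), or a triangle {p, q, r}, giving N(x) u K_x^{p,q,r}.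
   Otherwise both classes have exactly 4 elements and [s] has 8 vertices. *)

From mathcomp Require Import all_boot zify.
Set Implicit Arguments. Unset Strict Implicit. Unset Printing Implicit Defensive.

Section Hamming.
Variable n : nat.
Implicit Types (u v w y : vert n) (S : {set 'I_n}).

Definition hdiff u v : {set 'I_n} := [set i | u i != v i].

Lemma hdistE u v : hdist u v = #|hdiff u v|. Proof. by []. Qed.

Lemma hdiffC u v : hdiff u v = hdiff v u.
Proof. by apply/setP=> i; rewrite !inE eq_sym. Qed.

Lemma hdistC u v : hdist u v = hdist v u.
Proof. by rewrite !hdistE hdiffC. Qed.

Lemma hdist_eq0 u v : (hdist u v == 0) = (u == v).
Proof.
rewrite hdistE cards_eq0; apply/eqP/eqP => [uv0 | ->].
  apply/ffunP=> i; apply/eqP; apply: contraFT (in_set0 i) => ?.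
  by rewrite -uv0 inE.
by apply/setP=> i; rewrite !inE eqxx.
Qed.

Lemma hdistxx u : hdist u u = 0.
Proof. by apply/eqP; rewrite hdist_eq0. Qed.

(* [hdiff u w] is the symmetric difference of [hdiff u v] and [hdiff v w]. *)
Lemma hdist_triE u v w :
  hdist u w + 2 * #|hdiff u v :&: hdiff v w| = hdist u v + hdist v w.
Proof.
rewrite !hdistE.
have -> : hdiff u w = hdiff u v :\: hdiff v w :|: hdiff v w :\: hdiff u v.
  by apply/setP=> i; rewrite !inE; case: (u i); case: (v i); case: (w i).
rewrite cardsU.
have -> : (hdiff u v :\: hdiff v w) :&: (hdiff v w :\: hdiff u v) = set0.
  by apply/setP=> i; rewrite !inE; case: (u i); case: (v i); case: (w i).
have := cardsID (hdiff v w) (hdiff u v); have := cardsID (hdiff u v) (hdiff v w).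
rewrite cards0 (setIC (hdiff v w)); lia.
Qed.

Lemma hdist_triangle u v w : hdist u w <= hdist u v + hdist v w.
Proof. have := hdist_triE u v w; lia. Qed.

Lemma odd_hdist u v w : odd (hdist u w) = odd (hdist u v) (+) odd (hdist v w).
Proof. by rewrite -oddD -hdist_triE oddD oddM addbF. Qed.

Lemma hdist_even_le3 u v :
  u != v -> ~~ odd (hdist u v) -> hdist u v <= 3 -> hdist u v = 2.
Proof. by rewrite -hdist_eq0; case: (hdist u v) => [|[|[|[|k]]]]. Qed.

Lemma hdiff_flips u S : hdiff u (flips u S) = S.
Proof. by apply/setP=> i; rewrite !inE ffunE; case: (i \in S); case: (u i). Qed.

Lemma hdist_flips u S : hdist u (flips u S) = #|S|.
Proof. by rewrite hdistE hdiff_flips. Qed.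

Lemma flips_hdiff u v : flips u (hdiff u v) = v.
Proof. by apply/ffunP=> i; rewrite ffunE inE; case: (u i); case: (v i). Qed.

Lemma flips_inj u : injective (flips u).
Proof. by move=> S1 S2 eqS; rewrite -(hdiff_flips u S1) eqS hdiff_flips. Qed.

Lemma hdiff_inj u : injective (hdiff u).
Proof. by move=> v w eqD; rewrite -(flips_hdiff u v) eqD flips_hdiff. Qed.

Lemma flips0 u : flips u set0 = u.
Proof. by apply/ffunP=> i; rewrite ffunE inE. Qed.

Lemma hdist_flips_le u S1 S2 : hdist (flips u S1) (flips u S2) <= #|S1 :|: S2|.
Proof.
rewrite hdistE; apply: subset_leq_card; apply/subsetP=> i.
by rewrite !inE !ffunE; case: (i \in S1); case: (i \in S2); rewrite ?eqxx.
Qed.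

Lemma hdist_flip1 u j : hdist u (flip1 u j) = 1.
Proof. by rewrite hdist_flips cards1. Qed.

Lemma hdist_flip1E u j w :
  hdist (flip1 u j) w = if j \in hdiff u w then (hdist u w).-1 else (hdist u w).+1.
Proof.
have := hdist_triE (flip1 u j) u w.
rewrite /flip1 (hdistC _ u) hdist_flips cards1 (hdiffC _ u) hdiff_flips.
case: ifP => jD.
  by rewrite (setIidPl _) ?sub1set // cards1; lia.
have -> : [set j] :&: hdiff u w = set0 by apply/disjoint_setI0; rewrite disjoints1 jD.
rewrite cards0; lia.
Qed.

Lemma in_nbhd u y : (y \in nbhd u) = (hdist u y == 1).
Proof.
apply/imsetP/eqP => [[i _ ->]|uy1]; first exact: hdist_flip1.
have /cards1P [i Di] : #|hdiff u y| == 1 by rewrite -hdistE uy1.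
by exists i => //; rewrite /flip1 -Di flips_hdiff.
Qed.

Lemma card_nbhd u : #|nbhd u| = n.
Proof.
rewrite card_imset ?card_ord // => i j /flips_inj /setP /(_ i).
by rewrite !inE eqxx => /esym/eqP.
Qed.

Lemma hdiff_meet u y z :
  hdist u y = 2 -> hdist u z = 2 -> hdist y z <= 2 -> hdiff u y :&: hdiff u z != set0.
Proof.
move=> uy2 uz2 yz2; rewrite -card_gt0.
have := hdist_triE y u z; rewrite (hdistC y u) uy2 uz2 (hdiffC y u); lia.
Qed.

End Hamming.

Section SmallSets.
Variable T : finType.
Implicit Types (S : {set T}) (F : {set {set T}}).

Lemma card2_eq S a b : #|S| = 2 -> a \in S -> b \in S -> a != b -> S = [set a; b].
Proof.
move=> S2 aS bS ab; apply/esym/eqP; rewrite eqEcard cards2 ab S2 andbT.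
by apply/subsetP=> c; rewrite !inE => /orP[] /eqP ->.
Qed.

Lemma meet_pair S a b : S :&: [set a; b] != set0 -> a \notin S -> b \in S.
Proof. by case/set0Pn=> c; rewrite !inE => /andP[cS /orP[] /eqP eqc]; rewrite -eqc ?cS. Qed.

Lemma card2_meet_triangle S p q r :
  p != q -> q != r -> p != r -> #|S| = 2 ->
  S :&: [set p; q] != set0 -> S :&: [set q; r] != set0 -> S :&: [set p; r] != set0 ->
  S \in [set [set p; q]; [set q; r]; [set p; r]].
Proof.
move=> pq qr pr S2 Spq Sqr Spr; rewrite !inE.
have [pS|pS] := boolP (p \in S).
  have [qS|qS] := boolP (q \in S); first by rewrite (card2_eq S2 pS qS pq) eqxx.
  by rewrite (card2_eq S2 pS (meet_pair Sqr qS) pr) eqxx !orbT.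
have qS := meet_pair Spq pS; have rS := meet_pair Spr pS.
by rewrite (card2_eq S2 qS rS qr) eqxx orbT.
Qed.

Lemma meeting_pairs F :
  F != set0 -> {in F, forall S, #|S| = 2} -> {in F &, forall S S', S :&: S' != set0} ->
  (exists p, {in F, forall S, p \in S}) \/
  (exists p q r, [/\ p != q, q != r, p != r &
                     F \subset [set [set p; q]; [set q; r]; [set p; r]]]).
Proof.
move=> /set0Pn[S0 S0F] F2 Fmeet.
have /cards2P[p [q [pq eqS0]]] : #|S0| == 2 by rewrite F2.
have [/forall_inP pF|/forall_inPn[S1 S1F pS1]] := boolP [forall (S | S \in F), p \in S].
  by left; exists p.
have qS1 : q \in S1 by rewrite (meet_pair _ pS1) // -eqS0 Fmeet.
have [/forall_inP qF|/forall_inPn[S2 S2F qS2]] := boolP [forall (S | S \in F), q \in S].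
  by left; exists q.
have pS2 : p \in S2 by apply: (meet_pair (a := q)) => //; rewrite setUC -eqS0 Fmeet.
have /set0Pn[r /setD1P[rq rS1]] : S1 :\ q != set0.
  by rewrite -card_gt0; have := cardsD1 q S1; rewrite qS1 F2 //; lia.
have eqS1 : S1 = [set q; r] by rewrite (card2_eq (F2 _ S1F) qS1 rS1) // eq_sym.
have pr : p != r by apply: contraNneq pS1 => ->.
have rS2 : r \in S2 by rewrite (meet_pair _ qS2) // -eqS1 Fmeet.
have eqS2 : S2 = [set p; r] by rewrite (card2_eq (F2 _ S2F) pS2 rS2).
have qr : q != r by rewrite eq_sym.
right; exists p, q, r; split=> //.
apply/subsetP=> S SF; apply: card2_meet_triangle; rewrite ?F2 //.
- by rewrite -eqS0 Fmeet.
- by rewrite -eqS1 Fmeet.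
- by rewrite -eqS2 Fmeet.
Qed.

Lemma exists_notin_bigcup (I : finType) (U : {set T}) (A : {set I}) (F : I -> {set T}) :
  \sum_(i in A) #|U :&: F i| < #|U| -> exists2 t, t \in U & {in A, forall i, t \notin F i}.
Proof.
move=> small.
have [sub|/subsetPn[t tU tnF]] := boolP (U \subset \bigcup_(i in A) (U :&: F i)).
  suff : #|\bigcup_(i in A) (U :&: F i)| <= \sum_(i in A) #|U :&: F i|.
    by have := subset_leq_card sub; lia.
  elim/big_rec2: _ => [|i X m _ le_Xm]; first by rewrite cards0.
  by rewrite cardsU; lia.
exists t => // i iA; apply: contra tnF => tF.
by apply/bigcupP; exists i; rewrite ?inE ?tU.
Qed.

Lemma card4 (a b c d : T) :
  a != b -> a != c -> a != d -> b != c -> b != d -> c != d -> #|[set a; b; c; d]| = 4.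
Proof.
move=> ab ac ad bc bd cd; rewrite -!setUA !cardsU1 cards1 !inE.
by rewrite (negbTE ab) (negbTE ac) (negbTE ad) (negbTE bc) (negbTE bd) (negbTE cd).
Qed.

End SmallSets.

Section Shapes.
Variable n : nat.
Implicit Types (u v w y : vert n) (i j k : 'I_n).

Lemma simplex_nbhdU_adj v w : 0 < n -> hdist v w = 1 -> simplex (nbhd v :|: nbhd w).
Proof.
move=> n_gt0 vw1; split.
  by apply/set0Pn; exists (flip1 v (Ordinal n_gt0)); rewrite inE imset_f.
have near y : y \in nbhd v :|: nbhd w -> exists2 c, c \in [set v; w] & hdist y c = 1.
  by rewrite !inE !in_nbhd => /orP[] /eqP cy1; [exists v | exists w];
    rewrite ?inE ?eqxx ?orbT // hdistC.
have vw c c' : c \in [set v; w] -> c' \in [set v; w] -> hdist c c' <= 1.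
  by rewrite !inE => /orP[] /eqP-> /orP[] /eqP->; rewrite ?hdistxx ?vw1 // hdistC vw1.
move=> y y' /near[c cvw yc] /near[c' c'vw y'c].
have := hdist_triangle y c y'; have := hdist_triangle c c' y'; have := vw c c' cvw c'vw.
rewrite (hdistC c' y'); lia.
Qed.

Lemma simplex_nbhdU_Kset u i j k : simplex (nbhd u :|: Kset u i j k).
Proof.
split; first by apply/set0Pn; exists u; rewrite !inE eqxx orbT.
have shape y : y \in nbhd u :|: Kset u i j k -> exists2 S, y = flips u S &
    #|S| <= 1 \/ #|S| <= 2 /\ S \subset [set i; j; k].
  have sub3 a b : a \in [set i; j; k] -> b \in [set i; j; k] ->
      #|[set a; b]| <= 2 /\ [set a; b] \subset [set i; j; k].
    by move=> a3 b3; rewrite cards2 subUset !sub1set a3 b3; case: (a != b).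
  rewrite inE => /orP[/imsetP[a _ ->]|]; first by exists [set a] => //; rewrite cards1; left.
  rewrite !inE -!orbA => /or4P[/eqP->|/eqP->|/eqP->|/eqP->].
  - by exists set0; rewrite ?flips0 // cards0; left.
  - by exists [set i; j] => //; right; apply: sub3; rewrite !inE eqxx ?orbT.
  - by exists [set j; k] => //; right; apply: sub3; rewrite !inE eqxx ?orbT.
  - by exists [set i; k] => //; right; apply: sub3; rewrite !inE eqxx ?orbT.
move=> y y' /shape[S -> hS] /shape[S' -> hS'].
apply: leq_trans (hdist_flips_le _ _ _) _.
case: hS hS' => [S1|[S2 Sijk]] [S'1|[S'2 S'ijk]]; try by rewrite cardsU; lia.
apply: (@leq_trans #|[set i; j; k]|); last by rewrite !cardsU !cards1; lia.
by apply: subset_leq_card; rewrite subUset Sijk S'ijk.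
Qed.

Lemma card_nbhdU_adj v w : hdist v w = 1 -> #|nbhd v :|: nbhd w| = 2 * n.
Proof.
move=> vw1; rewrite cardsU !card_nbhd.
suff -> : nbhd v :&: nbhd w = set0 by rewrite cards0; lia.
apply/setP=> y; rewrite !inE !in_nbhd; apply/negbTE/andP=> -[/eqP vy1 /eqP wy1].
by have := odd_hdist v y w; rewrite vy1 (hdistC y) wy1 vw1.
Qed.

Lemma card_nbhdU_Kset u i j k :
  i != j -> j != k -> i != k -> #|nbhd u :|: Kset u i j k| = n + 4.
Proof.
move=> ij jk ik.
have flip2_neq a b c d : [set a; b] != [set c; d] -> flip2 u a b != flip2 u c d.
  by apply: contra => /eqP/flips_inj ->.
have u_neq a b : a != b -> u != flip2 u a b.
  by move=> ab; rewrite -hdist_eq0 hdist_flips cards2 ab.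
rewrite cardsU card_nbhd.
have -> : nbhd u :&: Kset u i j k = set0.
  apply/setP=> y; rewrite !inE in_nbhd -!orbA; apply/negbTE/andP=> -[/eqP uy1].
  by case/or4P=> /eqP eqy; move: uy1; rewrite eqy ?hdistxx // hdist_flips cards2 ?ij ?jk ?ik.
rewrite cards0 subn0 /Kset card4 ?u_neq ?flip2_neq //.
all: apply/eqP=> /setP eqS.
- by have := eqS i; rewrite !inE eqxx (negbTE ij) (negbTE ik).
- by have := eqS j; rewrite !inE eqxx orbT (eq_sym j i) (negbTE ij) (negbTE jk).
- by have := eqS j; rewrite !inE eqxx (eq_sym j i) (negbTE ij) (negbTE jk).
Qed.

End Shapes.

Lemma exists_flip1_dist2 n (b : vert n) (A : {set vert n}) :
  #|A| < 4 -> 4 <= n -> {in A, forall y, hdist b y = 1 \/ hdist b y = 3} ->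
  {in A &, forall y y', y != y' -> hdist y y' = 2} ->
  exists j, {in A, forall y, hdist (flip1 b j) y = 2}.
Proof.
move=> A_lt4 n_ge4 Adist A2.
pose bad y := [set j | hdist (flip1 b j) y != 2].
suff [U sumU] : exists U, \sum_(y in A) #|U :&: bad y| < #|U|.
  have [j _ jA] := exists_notin_bigcup sumU.
  by exists j => y /jA; rewrite inE negbK => /eqP.
have bad_near y U : hdist b y = 1 -> #|U :&: bad y| <= 1.
  move=> by1; rewrite -by1 hdistE; apply: subset_leq_card; apply/subsetP=> j.
  by rewrite in_setI [j \in bad y]inE hdist_flip1E by1; case: ifP; rewrite ?andbF.
have [/exists_inP[a aA /eqP ba3]|no3] := boolP [exists a in A, hdist b a == 3].
  exists (hdiff b a); rewrite -hdistE ba3.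
  have bad_far y : y \in A -> y != a -> #|hdiff b a :&: bad y| <= 1.
    move=> yA ya; case: (Adist y yA) => [/bad_near //|by3].
    apply: (@leq_trans #|hdiff b a :\: hdiff b y|).
      apply: subset_leq_card; apply/subsetP=> j.
      rewrite in_setI in_setD [j \in bad y]inE hdist_flip1E by3.
      by case: ifP; rewrite /= ?andbF ?andbT.
    have := hdist_triE a b y; rewrite (hdistC a b) (hdiffC a b) ba3 by3 A2 1?eq_sym //.
    by rewrite cardsD -hdistE ba3; lia.
  rewrite (big_setD1 a) //= (_ : _ :&: bad a = set0) ?cards0; last first.
    by apply/setP=> j; rewrite in_setI [j \in bad a]inE hdist_flip1E ba3 in_set0; case: ifP.
  apply: (@leq_ltn_trans (\sum_(y in A :\ a) 1)).
    by apply: leq_sum => y /setD1P[ya yA]; apply: bad_far.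
  by rewrite sum1_card; have := cardsD1 a A; rewrite aA; lia.
exists setT; rewrite cardsT card_ord.
apply: (@leq_ltn_trans (\sum_(y in A) 1)); last by rewrite sum1_card; lia.
apply: leq_sum => y yA; apply: bad_near.
by case: (Adist y yA) => // by3; case/negP: no3; apply/exists_inP; exists y; rewrite // by3.
Qed.

Lemma dist2_sub_nbhd n (X : {set vert n}) :
  {in X &, forall y y', y != y' -> hdist y y' = 2} -> 5 <= #|X| -> exists x, X \subset nbhd x.
Proof.
move=> X2 X_ge5.
have /set0Pn[a aX] : X != set0 by rewrite -card_gt0; lia.
pose F := hdiff a @: (X :\ a).
have F2 : {in F, forall S : {set 'I_n}, #|S| = 2}.
  by move=> S /imsetP[y /setD1P[ya yX] ->]; rewrite -hdistE X2 // eq_sym.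
have Fmeet : {in F &, forall S S' : {set 'I_n}, S :&: S' != set0}.
  move=> S S' /imsetP[y /setD1P[ya yX] ->] /imsetP[y' /setD1P[y'a y'X] ->].
  apply: hdiff_meet; last by have [->|yy'] := eqVneq y y'; rewrite ?hdistxx ?X2.
  - by rewrite X2 // eq_sym.
  - by rewrite X2 // eq_sym.
have cardF : #|F| = #|X| - 1.
  by rewrite card_imset; [rewrite (cardsD1 a X) aX add1n subn1 | exact: hdiff_inj].
have F0 : F != set0 by rewrite -card_gt0 cardF; lia.
case: (meeting_pairs F0 F2 Fmeet) => [[p pF]|[p [q [r [_ _ _ Fpqr]]]]].
  exists (flip1 a p); apply/subsetP=> y yX; rewrite in_nbhd hdist_flip1E.
  have [->|ya] := eqVneq y a; first by rewrite inE eqxx hdistxx.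
  by rewrite pF ?imset_f ?inE ?ya // X2 // eq_sym.
have := subset_leq_card Fpqr; rewrite cardF !cardsU !cards1; lia.
Qed.

Definition nbhd_pair n (s : {set vert n}) :=
  exists v w, hdist v w = 1 /\ s = nbhd v :|: nbhd w.

Definition nbhd_triangle n (s : {set vert n}) :=
  exists u i j k, [/\ i != j, j != k & i != k] /\ s = nbhd u :|: Kset u i j k.

Section MaximalSimplex.
Variables (n : nat) (s : {set vert n}).
Hypothesis s_max : maximal_simplex s.

Lemma maximal_hdist y z : y \in s -> z \in s -> hdist y z <= 3.
Proof. exact: s_max.1.2. Qed.

Lemma maximal_eq t : simplex t -> s \subset t -> s = t.
Proof. by move=> t_simplex st; rewrite (s_max.2 t). Qed.

Lemma maximal_mem z : {in s, forall y, hdist z y <= 3} -> z \in s.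
Proof.
move=> zs; suff <- : z |: s = s by rewrite setU11.
apply/esym/maximal_eq; last exact: subsetUr.
split; first by apply/set0Pn; exists z; rewrite setU11.
move=> x y /setU1P[->|xs] /setU1P[->|ys]; rewrite ?hdistxx ?zs //.
  by rewrite hdistC zs.
exact: maximal_hdist.
Qed.

Definition odd_part b := [set y in s | odd (hdist b y)].

Lemma odd_part_dist2 b : {in odd_part b &, forall y y', y != y' -> hdist y y' = 2}.
Proof.
move=> y y'; rewrite !inE => /andP[ys ody] /andP[y's ody'] yy'.
by rewrite hdist_even_le3 ?maximal_hdist // (odd_hdist y b) hdistC ody ody'.
Qed.

Lemma odd_partD b a : a \in odd_part b -> odd_part a = s :\: odd_part b.
Proof.
rewrite inE => /andP[_ oba]; apply/setP=> y; rewrite !inE.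
by case: (y \in s); rewrite //= (odd_hdist a b) (hdistC a b) oba andbT.
Qed.

(* Otherwise some neighbour of [b] is at distance 2 from the whole odd part,
   hence within distance 3 of all of [s]; by maximality it would lie in the
   odd part, at distance 2 from itself. *)
Lemma card_odd_part b : 4 <= n -> b \in s -> 4 <= #|odd_part b|.
Proof.
move=> n_ge4 bs; rewrite leqNgt; apply/negP=> small.
have near y : y \in odd_part b -> hdist b y = 1 \/ hdist b y = 3.
  rewrite inE => /andP[ys]; have := maximal_hdist bs ys.
  by case: (hdist b y) => [|[|[|[|k]]]]; auto.
have [j jA] := exists_flip1_dist2 small n_ge4 near (@odd_part_dist2 b).
suff /jA : flip1 b j \in odd_part b by rewrite hdistxx.
rewrite inE hdist_flip1 andbT; apply: maximal_mem => y ys.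
have [oby|eby] := boolP (odd (hdist b y)); first by rewrite jA // inE ys.
have := hdist_triangle (flip1 b j) b y; rewrite (hdistC _ b) hdist_flip1.
have := maximal_hdist bs ys; move: eby; case: (hdist b y) => [|[|[|[|k]]]] //; lia.
Qed.

(* A vertex at distance [d >= 3] from [x] is within distance 3 of at most
   [d <= 4] neighbours of [x]. *)
Lemma ball2_of_nbhd x (X : {set vert n}) :
  X \subset s -> X \subset nbhd x -> 5 <= #|X| -> {in s, forall y, hdist x y <= 2}.
Proof.
move=> Xs Xx X_ge5 y ys; rewrite leqNgt; apply/negP=> far.
have /set0Pn[m mX] : X != set0 by rewrite -card_gt0; lia.
have := subsetP Xx m mX; rewrite in_nbhd => /eqP xm1.
have := hdist_triangle x m y; have := maximal_hdist (subsetP Xs m mX) ys.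
suff : X \subset flip1 x @: hdiff x y.
  move/subset_leq_card/leq_trans/(_ (leq_imset_card _ _)); rewrite -hdistE; lia.
apply/subsetP=> _ /[dup] /(subsetP Xx) /imsetP[k _ ->] /(subsetP Xs) ks.
apply: imset_f; apply: contraTT (maximal_hdist ks ys) => kD.
by rewrite hdist_flip1E (negbTE kD) -ltnNge; lia.
Qed.

(* The vertices at distance 2 from [x] correspond to pairwise intersecting
   2-sets of coordinates: a star gives [nbhd_pair], a triangle [nbhd_triangle]. *)
Lemma maximal_in_ball2 x :
  0 < n -> {in s, forall y, hdist x y <= 2} -> nbhd_pair s \/ nbhd_triangle s.
Proof.
move=> n_gt0 ball2.
pose F := hdiff x @: [set y in s | hdist x y == 2].
have F2 : {in F, forall S : {set 'I_n}, #|S| = 2}.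
  by move=> S /imsetP[y]; rewrite inE => /andP[_ /eqP xy2] ->; rewrite -hdistE.
have Fmeet : {in F &, forall S S' : {set 'I_n}, S :&: S' != set0}.
  move=> S S' /imsetP[y]; rewrite inE => /andP[ys /eqP xy2] ->.
  move=> /imsetP[y']; rewrite inE => /andP[y's /eqP xy'2] ->.
  apply: hdiff_meet => //; have := maximal_hdist ys y's.
  have := odd_hdist y x y'; rewrite (hdistC y x) xy2 xy'2 /=.
  by case: (hdist y y') => [|[|[|[|k]]]].
have cover y : y \in s -> [\/ y = x, hdist x y = 1 | hdiff x y \in F].
  move=> ys; have := ball2 y ys; case xy: (hdist x y) => [|[|[|k]]] // _.
  - by apply: Or31; apply/esym/eqP; rewrite -hdist_eq0 xy.
  - by apply: Or32.
  - by apply: Or33; apply: imset_f; rewrite inE ys xy.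
have [[p pF]|[p [q [r [pq qr pr Fpqr]]]]] :
    (exists p, {in F, forall S : {set 'I_n}, p \in S}) \/
    (exists p q r, [/\ p != q, q != r, p != r &
                       F \subset [set [set p; q]; [set q; r]; [set p; r]]]).
  case: (eqVneq F set0) => [->|F0]; last exact: meeting_pairs.
  by left; exists (Ordinal n_gt0) => S; rewrite in_set0.
- left; exists x, (flip1 x p); split; first exact: hdist_flip1.
  apply: maximal_eq; first by apply: simplex_nbhdU_adj; rewrite ?hdist_flip1.
  apply/subsetP=> y /cover[->|xy1|Fy]; rewrite inE !in_nbhd ?xy1 //.
    by rewrite hdistC hdist_flip1 orbT.
  by rewrite hdist_flip1E pF // hdistE F2 ?orbT.
- right; exists x, p, q, r; split => //.
  apply: maximal_eq; first exact: simplex_nbhdU_Kset.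
  apply/subsetP=> y /cover[->|xy1|Fy]; rewrite !inE ?in_nbhd ?xy1 ?eqxx ?orbT //.
  move: (subsetP Fpqr _ Fy); rewrite !inE -orbA => /or3P[] /eqP Dy;
    by rewrite -(flips_hdiff x y) Dy eqxx ?orbT.
Qed.

Lemma maximal_simplex_shape :
  4 <= n -> #|s| = 8 \/ nbhd_pair s \/ nbhd_triangle s.
Proof.
move=> n_ge4; have /set0Pn[b bs] := s_max.1.1.
have odd_part_sub c : odd_part c \subset s.
  by apply/subsetP=> y; rewrite inE => /andP[].
have large c : 5 <= #|odd_part c| -> nbhd_pair s \/ nbhd_triangle s.
  move=> c_ge5; have [x cx] := dist2_sub_nbhd (@odd_part_dist2 c) c_ge5.
  by apply: (maximal_in_ball2 (x := x)); [lia | exact: ball2_of_nbhd cx c_ge5].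
have [/large|b_le4] := leqP 5 #|odd_part b|; first by right.
have b_ge4 := card_odd_part n_ge4 bs.
have /set0Pn[a ab] : odd_part b != set0 by rewrite -card_gt0; lia.
have [/large|a_le4] := leqP 5 #|odd_part a|; first by right.
have a_ge4 := card_odd_part n_ge4 (subsetP (odd_part_sub b) a ab).
left; rewrite -(cardsID (odd_part b) s) -(odd_partD ab) (setIidPr (odd_part_sub b)); lia.
Qed.

End MaximalSimplex.

Theorem mainTheorem12 (n : nat) (s : {set vert n}) :
  4 <= n -> maximal_simplex s ->
  (dim s = 7 \/ dim s = n + 3 \/ dim s = 2 * n - 1) /\
  (dim s <> 7 ->
     (exists v w : vert n, hdist v w = 1 /\ s = nbhd v :|: nbhd w) \/
     (exists (u : vert n) (i j k : 'I_n),
        [/\ i != j, j != k & i != k] /\ s = nbhd u :|: Kset u i j k)).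
Proof.
move=> n_ge4 s_max; rewrite /dim.
have [s8|[[v [w [vw1 ->]]]|[u [i [j [k [[ij jk ik] ->]]]]]]] :=
  maximal_simplex_shape s_max n_ge4.
- by rewrite s8; split; [left|].
- rewrite card_nbhdU_adj // -subn1; split; first by do 2 right.
  by left; exists v, w.
- rewrite card_nbhdU_Kset // addnS; split; first by right; left.
  by right; exists u, i, j, k.
Qed.
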